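(* Let $R_1$ and $R_2$ be rings, let $S$ be a subring of $R_2$, and let $F: R_1 \to 2^{R_2}$ be a powerful set-valued homomorphism such that $F(0_{R_1}) \subseteq S$, where $0_{R_1}$ is the zero element of $R_1$. Then the set $\underline{F}(S) = \{x \in R_1 : F(x) \subseteq S\}$ is a subring of $R_1$.
   Context: For a ring $R$, $2^{R}$ denotes the set of subsets of $R$. For $A, B \subseteq R$ write $A + B = \{a+b : a \in A, b \in B\}$, $AB = \{ab : a \in A, b \in B\}$ and $-A = \{-a : a \in A\}$. A powerful set-valued homomorphism from a ring $R_1$ to $2^{R_2}$ is a map $F: R_1 \to 2^{R_2}$ such that for all $x, y \in R_1$: $F(x+y) = F(x) + F(y)$, $F(xy) = F(x)F(y)$, and $F(-x) = -F(x)$. A subring means a nonempty subset closed under addition, multiplication and additive inverses. *)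

From HB Require Import structures.
From mathcomp Require Import all_boot all_algebra.
Set Implicit Arguments. Unset Strict Implicit. Unset Printing Implicit Defensive.
Import GRing.Theory.
Local Open Scope ring_scope.

(* Subsets of a type are predicates T -> Prop; 2^R is R -> Prop. *)
Definition set_add (R : pzRingType) (A B : R -> Prop) : R -> Prop :=
  fun z => exists a b, A a /\ B b /\ z = a + b.
Definition set_mul (R : pzRingType) (A B : R -> Prop) : R -> Prop :=
  fun z => exists a b, A a /\ B b /\ z = a * b.
Definition set_opp (R : pzRingType) (A : R -> Prop) : R -> Prop :=
  fun z => exists a, A a /\ z = - a.

Definition powerful_svhom (R1 R2 : pzRingType) (F : R1 -> R2 -> Prop) : Prop :=
  forall x y : R1,
    F (x + y) = set_add (F x) (F y) /\
    F (x * y) = set_mul (F x) (F y) /\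
    F (- x) = set_opp (F x).

(* Subring: nonempty, closed under +, *, additive inverse (no 1 required). *)
Definition is_subring (R : pzRingType) (S : R -> Prop) : Prop :=
  (exists x, S x) /\
  (forall x y, S x -> S y -> S (x + y)) /\
  (forall x y, S x -> S y -> S (x * y)) /\
  (forall x, S x -> S (- x)).

Definition subset_of (T : Type) (A B : T -> Prop) : Prop := forall x, A x -> B x.

Definition lower_image (R1 R2 : pzRingType) (F : R1 -> R2 -> Prop) (S : R2 -> Prop)
  : R1 -> Prop := fun x => subset_of (F x) S.

From mathcomp Require Import all_boot all_algebra.
Local Open Scope ring_scope.

Section LowerImage.

Variables (R1 R2 : pzRingType) (F : R1 -> R2 -> Prop) (S : R2 -> Prop).

Lemma lower_imageD :
  (forall x y, F (x + y) = set_add (F x) (F y)) ->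
  (forall a b, S a -> S b -> S (a + b)) ->
  forall x y, lower_image F S x -> lower_image F S y -> lower_image F S (x + y).
Proof.
move=> FD SD x y Fx_S Fy_S z; rewrite FD => -[a [b [Fa [Fb ->]]]].
exact: SD (Fx_S a Fa) (Fy_S b Fb).
Qed.

Lemma lower_imageM :
  (forall x y, F (x * y) = set_mul (F x) (F y)) ->
  (forall a b, S a -> S b -> S (a * b)) ->
  forall x y, lower_image F S x -> lower_image F S y -> lower_image F S (x * y).
Proof.
move=> FM SM x y Fx_S Fy_S z; rewrite FM => -[a [b [Fa [Fb ->]]]].
exact: SM (Fx_S a Fa) (Fy_S b Fb).
Qed.

Lemma lower_imageN :
  (forall x, F (- x) = set_opp (F x)) ->
  (forall a, S a -> S (- a)) ->
  forall x, lower_image F S x -> lower_image F S (- x).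
Proof.
move=> FN SN x Fx_S z; rewrite FN => -[a [Fa ->]].
exact: SN (Fx_S a Fa).
Qed.

End LowerImage.

Theorem theorem4p1 (R1 R2 : pzRingType) (S : R2 -> Prop) (F : R1 -> R2 -> Prop) :
  is_subring S -> powerful_svhom F -> subset_of (F 0) S ->
  is_subring (lower_image F S).
Proof.
move=> [_ [SD [SM SN]]] hF F0_S.
have FD x y := (hF x y).1.
have FM x y := (hF x y).2.1.
have FN x := (hF x x).2.2.
split; first by exists 0.
split; first exact: lower_imageD.
split; first exact: lower_imageM.
exact: lower_imageN.
Qed.
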